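(* If $(a_0,a_1,\cdots,a_{k-1})\neq0$, then \[{\rm rk}(B_{\vec a})\geq \frac{m}{e}-2(k-1).\]
   Context: Let $m,n,d,e$ be fixed positive integers such that $m=2n$, $e=\gcd(n,d)=\gcd(m,d)$, and $1\leq k\leq \frac{n}{e}$. For $\vec a=(a_0,a_1,\cdots,a_k)\in\mathbb{F}_{2^{n}}\times\mathbb{F}_{2^m}^k$, define the quadratic form on the $\mathbb{F}_{2^e}$-vector space $\mathbb{F}_{2^m}$ \[Q_{\vec a}(x)={\rm Tr}_{\mathbb{F}_{2^{n}}/\mathbb{F}_{2^e}}(a_0x^{2^{\frac{nd}{e}}+1})+\sum_{j=1}^{k-1}{\rm Tr}_{\mathbb{F}_{2^{m}}/\mathbb{F}_{2^e}}(a_jx^{2^{(\frac{n}{e}-j)d}+1})+{\rm Tr}_{\mathbb{F}_{2^{m}}/\mathbb{F}_{2^e}}(a_kx),\] and the associated $\mathbb{F}_{2^e}$-bilinear form $B_{\vec a}(x,y)=Q_{\vec a}(x+y)-Q_{\vec a}(x)-Q_{\vec a}(y)$, i.e. \[B_{\vec a}(x,y)={\rm Tr}_{\mathbb{F}_{2^{n}}/\mathbb{F}_{2^e}}(a_0(xy^{2^{\frac{nd}{e}}}+x^{2^{\frac{nd}{e}}}y))+\sum_{j=1}^{k-1}{\rm Tr}_{\mathbb{F}_{2^{m}}/\mathbb{F}_{2^e}}(a_j(xy^{2^{(\frac{n}{e}-j)d}}+x^{2^{(\frac{n}{e}-j)d}}y)).\] ${\rm rk}(B_{\vec a})$ denotes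 the rank of $B_{\vec a}$ as a bilinear form over $\mathbb{F}_{2^e}$ on $\mathbb{F}_{2^m}$, i.e. $\frac{m}{e}-\dim_{\mathbb{F}_{2^e}}{\rm Rad}(B_{\vec a})$, where ${\rm Rad}(B_{\vec a})=\{x\in\mathbb{F}_{2^m}\mid B_{\vec a}(x,y)=0~\forall y\in\mathbb{F}_{2^m}\}$. *)

From HB Require Import structures.
From mathcomp Require Import all_boot all_order all_algebra all_field.
Set Implicit Arguments. Unset Strict Implicit. Unset Printing Implicit Defensive.
Import GRing.Theory.
Local Open Scope ring_scope.

(* Setting: F is the base field F_{2^e} (#|F| = 2^e), L is a finite-dimensional
   field extension of F playing the role of F_{2^m} (\dim_F L = m/e). *)
Section Defs.
Variables (F : finFieldType) (L : fieldExtType F).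

Definition trq (e N : nat) (y : L) : L := \sum_(i < N) y ^+ (2 ^ (e * i)).

(* The bilinear form B_a(x,y); a 0 = a_0, a j = a_j (1 <= j <= k-1). m = 2n. *)
Definition Bform (n d e k : nat) (a : nat -> L) (x y : L) : L :=
  trq e (n %/ e) (a 0%N * (x * y ^+ (2 ^ ((n * d) %/ e)) + x ^+ (2 ^ ((n * d) %/ e)) * y))
  + \sum_(1 <= j < k) trq e ((2 * n) %/ e)
      (a j * (x * y ^+ (2 ^ ((n %/ e - j) * d)) + x ^+ (2 ^ ((n %/ e - j) * d)) * y)).

(* The radical Rad(B) = {x | B(x,y) = 0 for all y}, as an F-subspace of L
   (the span of the set, which is already a subspace). *)
Definition RadB (n d e k : nat) (a : nat -> L) : {vspace L} :=
  <<map (fun x : finvect_type L => (x : L))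
      (enum [pred x : finvect_type L |
               [forall y : finvect_type L, Bform n d e k a x y == 0%R]])>>%VS.

Definition rkB (n d e k : nat) (a : nat -> L) : nat :=
  ((2 * n) %/ e - \dim (RadB n d e k a))%N.
End Defs.

(* B(x, y) = Tr(y * Badj x) for an explicit map Badj, obtained by moving the Frobenius powers
   off y inside the trace (d/e odd makes the a_0 term fit); the trace form being nondegenerate,
   Rad(B) is contained in the kernel of Badj.  With s = frob d, a generator of Gal(L/F) since
   gcd(2n, d) = e, Badj(x) = sum_(i <= 2(k-1)) c_i s^(N-k+1+i)(x) with some c_i nonzero, and the
   zeros of such a twisted polynomial of degree D form an F-space of dimension at most D
   (induction on D: for a zero v, x |-> s(x/v) - x/v has kernel <[v]> and maps the zeros into
   those of a twisted polynomial of degree D - 1, by summation by parts). *)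
From HB Require Import structures.
From mathcomp Require Import all_boot all_order all_algebra all_field.
From mathcomp Require Import ring zify.
Import GRing.Theory.
Local Open Scope ring_scope.

Lemma linfunE {F : fieldType} {U V : vectType F} {f : U -> V} (f_lin : linear f) :
  linfun f =1 f.
Proof.
exact: (lfunE (HB.pack_for {linear U -> V} f (GRing.isLinear.Build F U V *:%R f f_lin))).
Qed.

Lemma sum_by_parts (R : comNzRingType) (c u : nat -> R) n :
  \sum_(0 <= i < n.+1) c i * u i =
  (\sum_(0 <= i < n.+1) c i) * u 0%N
  + \sum_(0 <= j < n) (\sum_(j.+1 <= i < n.+1) c i) * (u j.+1 - u j).
Proof.
elim: n => [|n IH]; first by rewrite !big_nat1 big_geq // addr0.
have tail_split : \sum_(0 <= j < n.+1) (\sum_(j.+1 <= i < n.+2) c i) * (u j.+1 - u j)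
    = \sum_(0 <= j < n.+1) (\sum_(j.+1 <= i < n.+1) c i) * (u j.+1 - u j)
      + c n.+1 * \sum_(0 <= j < n.+1) (u j.+1 - u j).
  rewrite mulr_sumr -big_split /=; apply: eq_big_nat => j /andP[_ hj].
  by rewrite (big_nat_recr n.+1) //= mulrDl.
have last0 : \sum_(0 <= j < n.+1) (\sum_(j.+1 <= i < n.+1) c i) * (u j.+1 - u j)
    = \sum_(0 <= j < n) (\sum_(j.+1 <= i < n.+1) c i) * (u j.+1 - u j).
  by rewrite big_nat_recr //= [X in _ + X * _]big_geq // mul0r addr0.
rewrite tail_split last0 telescope_sumr // (big_nat_recr n.+1) //= IH.
rewrite (big_nat_recr n.+1 0 c) //=; ring.
Qed.

Lemma tail_sum_neq0 (V : zmodType) (c : nat -> V) D :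
  \sum_(0 <= i < D.+2) c i = 0 -> (exists2 i, (i <= D.+1)%N & c i != 0) ->
  exists2 j, (j <= D)%N & \sum_(j.+1 <= i < D.+2) c i != 0.
Proof.
move=> sum0 [i i_le ci_nz]; pose tail j := \sum_(j.+1 <= i < D.+2) c i.
have tailS j : (j <= D)%N -> tail j = c j.+1 + tail j.+1 by move=> j_le; rewrite /tail big_ltn.
case: i i_le ci_nz => [|i] i_le ci_nz.
  exists 0%N => //; apply: contra ci_nz => /eqP tail0.
  by rewrite big_ltn // tail0 addr0 in sum0; rewrite sum0.
have [taili0|] := eqVneq (tail i) 0; last by exists i.
have i_lt : (i < D)%N.
  rewrite ltn_neqAle -ltnS i_le andbT; apply: contra ci_nz => /eqP iD.
  by move: taili0; rewrite tailS // iD /tail big_geq // addr0 => ->.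
exists i.+1 => //; apply: contra ci_nz; rewrite -/(tail i.+1) => /eqP tail1.
have tailS_i : tail i = c i.+1 + tail i.+1 by rewrite tailS // ltnW.
by move: taili0; rewrite tailS_i tail1 addr0 => ->.
Qed.

Section SemilinearRoots.
Variables (F : fieldType) (L : fieldExtType F) (s : {rmorphism L -> L}).
Hypothesis sZ : forall (a : F) x, s (a *: x) = a *: s x.
Hypothesis s_fixed : forall x, s x = x -> x \in 1%VS.

Lemma iter_rmorphB t x y : iter t s (x - y) = iter t s x - iter t s y.
Proof. by elim: t => //= t ->; rewrite rmorphB. Qed.

Lemma iter_rmorphM t x y : iter t s (x * y) = iter t s x * iter t s y.
Proof. by elim: t => //= t ->; rewrite rmorphM. Qed.

Lemma iter_rmorph1 t : iter t s 1 = 1.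
Proof. by elim: t => //= t ->; rewrite rmorph1. Qed.

Lemma iter_rmorph_eq0 t x : (iter t s x == 0) = (x == 0).
Proof. by elim: t => //= t <-; rewrite fmorph_eq0. Qed.

Definition twisted_diff (v x : L) := s (x / v) - x / v.

Lemma twisted_diff_linear v : linear (twisted_diff v).
Proof.
by move=> a x y; rewrite /twisted_diff mulrDl -scalerAl !rmorphD sZ scalerBr addrACA opprD.
Qed.

Lemma lker_twisted_diff v : v != 0 -> (lker (linfun (twisted_diff v)) <= <[v]>)%VS.
Proof.
move=> nzv; apply/subvP => x; rewrite memv_ker (linfunE (twisted_diff_linear v)).
rewrite /twisted_diff subr_eq0 => /eqP /s_fixed /vlineP [a ha].
by rewrite -[x](divfK nzv) ha -scalerAl mul1r memvZ // memv_line.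
Qed.

Lemma dim_semilinear_roots M D (c : nat -> L) (V : {vspace L}) :
  (exists2 i, (i <= D)%N & c i != 0) ->
  (forall x, x \in V -> \sum_(0 <= i < D.+1) c i * iter (M + i) s x = 0) ->
  (\dim V <= D)%N.
Proof.
elim: D c V => [|D IH] c V [i hi ci] V_roots.
  move: hi; rewrite leqn0 => /eqP i0; rewrite {}i0 in ci.
  rewrite leqn0 dimv_eq0 -vpick0; apply/eqP.
  have /eqP := V_roots _ (memv_pick V); rewrite big_nat1 addn0.
  by rewrite mulf_eq0 (negPf ci) iter_rmorph_eq0 => /eqP.
have [->|nzV] := eqVneq V 0%VS; first by rewrite dimv0.
set v := vpick V; have vV : v \in V := memv_pick V.
have nzv : v != 0 by rewrite vpick0.
pose cv i := c i * iter (M + i) s v.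
have rootsE y : \sum_(0 <= i < D.+2) c i * iter (M + i) s (v * y)
    = \sum_(0 <= i < D.+2) cv i * iter (M + i) s y.
  by apply: eq_bigr => j _; rewrite iter_rmorphM mulrA.
have sum_cv : \sum_(0 <= i < D.+2) cv i = 0.
  have := V_roots _ vV; rewrite -[v]mulr1 rootsE => roots1; rewrite -[RHS]roots1.
  by apply: eq_bigr => j _; rewrite iter_rmorph1 mulr1.
pose c' j := \sum_(j.+1 <= i < D.+2) cv i.
have cv_i : cv i != 0 by rewrite mulf_neq0 // iter_rmorph_eq0.
have c'_nz : exists2 j, (j <= D)%N & c' j != 0.
  by apply: tail_sum_neq0 sum_cv _; exists i.
pose f := linfun (twisted_diff v).
have img_roots z : z \in (f @: V)%VS ->
    \sum_(0 <= j < D.+1) c' j * iter (M + j) s z = 0.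
  case/memv_imgP => x xV ->; rewrite (linfunE (twisted_diff_linear v)) /twisted_diff.
  move: (V_roots _ xV); rewrite {1}(_ : x = v * (x / v)) ?rootsE; last by rewrite mulrC divfK.
  rewrite (@sum_by_parts _ cv (fun i => iter (M + i) s (x / v))) sum_cv mul0r add0r.
  move=> roots_x; rewrite -[RHS]roots_x.
  by apply: eq_bigr => j _; rewrite addnS iterSr iter_rmorphB.
have dim_img : (\dim (f @: V) <= D)%N by apply: (IH c').
have dim_ker : (\dim (V :&: lker f) <= 1)%N.
  by rewrite (leq_trans (dimvS (subv_trans (capvSr _ _) (lker_twisted_diff _ nzv)))) // dim_vline nzv.
by rewrite -(limg_ker_dim f V) -add1n leq_add.
Qed.

End SemilinearRoots.

Section Frobenius.
Variables (F : finFieldType) (L : fieldExtType F) (e : nat).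
Hypothesis Fcard : #|F| = (2 ^ e)%N.

Definition frob (t : nat) (x : L) := x ^+ (2 ^ t).

Lemma frob_is_nmod_morphism t : nmod_morphism (frob t).
Proof.
have pchar2 : 2%N \in [pchar L] by rewrite (pchar_lalg L) (card_finPcharP Fcard).
split=> [|x y]; first by rewrite /frob expr0n expn_eq0.
by apply: exprDn_pchar; rewrite (eq_pnat _ (pcharf_eq pchar2)) pnatX pnat_id.
Qed.

Lemma frob_is_monoid_morphism t : monoid_morphism (frob t).
Proof. by split=> [|x y]; [exact: expr1n | exact: exprMn]. Qed.

HB.instance Definition _ t := GRing.isNmodMorphism.Build L L (frob t)
  (frob_is_nmod_morphism t).
HB.instance Definition _ t := GRing.isMonoidMorphism.Build L L (frob t)
  (frob_is_monoid_morphism t).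

Lemma frob0 x : frob 0 x = x.
Proof. exact: expr1. Qed.

Lemma frob_comp s t x : frob s (frob t x) = frob (t + s) x.
Proof. by rewrite /frob -exprM -expnD. Qed.

Lemma iter_frob s t x : iter s (frob t) x = frob (s * t) x.
Proof. by elim: s => [|s IH]; rewrite ?frob0 //= IH frob_comp mulSnr. Qed.

Lemma expf_card_pow (a : F) q : a ^+ (2 ^ (e * q)) = a.
Proof.
elim: q => [|q IH]; first by rewrite muln0 expr1.
by rewrite mulnS expnD exprM -Fcard expf_card IH.
Qed.

Lemma frobZ q (a : F) x : frob (e * q) (a *: x) = a *: frob (e * q) x.
Proof. by rewrite /frob exprZn expf_card_pow. Qed.

(* The roots of X^#|F| - X in L are the #|F| elements of F. *)
Lemma frob_fixed_mem1 x : frob e x = x -> x \in 1%VS.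
Proof.
move=> fix_x; apply: contraT => x_notin_F.
pose p : {poly L} := 'X^(2 ^ e) - 'X.
have size_p : size p = (2 ^ e).+1.
  rewrite size_polyDl ?size_polyXn // size_polyN size_polyX ltnS.
  by rewrite -Fcard card_finNzRing_gt1.
have p_nz : p != 0 by rewrite -size_poly_eq0 size_p.
have := max_poly_roots p_nz (rs := x :: map (in_alg L) (enum F)).
rewrite /= size_map -cardE Fcard size_p ltnn; apply; last first.
  rewrite map_inj_uniq ?enum_uniq ?andbT; last exact: fmorph_inj.
  by apply: contra x_notin_F => /mapP [a _ ->]; rewrite rpredZ ?mem1v.
apply/andP; split; first by rewrite /root !hornerE -[x in _ - x]fix_x subrr.
apply/allP => _ /mapP [a _ ->].
by rewrite /root !hornerE -rmorphXn -Fcard expf_card subrr.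
Qed.

Variable n : nat.
Hypothesis n_gt0 : (0 < n)%N.
Hypothesis e_dvd_n : (e %| n)%N.
Hypothesis Ldim : \dim {:L} = ((2 * n) %/ e)%N.

Local Notation N := (n %/ e)%N.
Local Notation N2 := ((2 * n) %/ e)%N.

Lemma e_gt0 : (0 < e)%N.
Proof. by rewrite lt0n; apply: contraTneq e_dvd_n => ->; rewrite dvd0n -lt0n. Qed.

Lemma mul_e_N2 : (e * N2 = 2 * n)%N.
Proof. by rewrite mulnC divnK // dvdn_mull. Qed.

Lemma N2_gt0 : (0 < N2)%N.
Proof. by rewrite -(ltn_pmul2l e_gt0) mul_e_N2 muln0 muln_gt0. Qed.

Lemma card_finvect : #|finvect_type L| = (2 ^ (2 * n))%N.
Proof.
have := card_vspace (fullv : {vspace finvect_type L}).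
rewrite card_vspacef Fcard -expnM => ->.
by rewrite [\dim _]Ldim mul_e_N2.
Qed.

Lemma frob_period x : frob (2 * n) x = x.
Proof. by rewrite /frob -card_finvect; exact: (expf_card (x : finvect_type L)). Qed.

Lemma frob_mod q r x : frob (q * (2 * n) + r) x = frob r x.
Proof. by rewrite -frob_comp -iter_frob; congr (frob r _); elim: q => //= q ->; rewrite frob_period. Qed.

Local Notation tr := (@trq F L e).

Lemma trq_is_nmod_morphism M : nmod_morphism (tr M).
Proof.
split=> [|x y]; first by rewrite /trq big1 // => i _; rewrite expr0n expn_eq0.
by rewrite /trq -big_split; apply: eq_bigr => i _; exact: (rmorphD (frob _)).
Qed.

HB.instance Definition _ M := GRing.isNmodMorphism.Build L L (tr M)
  (trq_is_nmod_morphism M).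

Lemma trq_frob x : tr N2 (frob e x) = tr N2 x.
Proof.
rewrite /trq; have := N2_gt0; have := mul_e_N2; case: N2 => [|M] // eM _.
rewrite big_ord_recr big_ord_recl /= addrC; congr (_ + _).
  by rewrite -/(frob _ (frob e x)) frob_comp -mulnS eM frob_period muln0 expr1.
by apply: eq_bigr => i _; rewrite -/(frob _ x) -/(frob _ (frob e x)) frob_comp -mulnS.
Qed.

Lemma trq_frob_mul q x : tr N2 (frob (e * q) x) = tr N2 x.
Proof.
elim: q => [|q IH]; first by rewrite muln0 frob0.
by rewrite mulnS addnC -frob_comp trq_frob IH.
Qed.

Lemma trq_half x : tr N2 x = tr N (x + frob n x).
Proof.
rewrite raddfD /trq (_ : N2 = N + N)%N; last by rewrite mul2n -addnn divnDl.
rewrite big_split_ord /=; congr (_ + _); apply: eq_bigr => i _.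
by rewrite -/(frob _ x) -/(frob _ (frob n x)) frob_comp mulnDr [(e * N)%N]mulnC divnK.
Qed.

(* A polynomial of degree 2^(2n-e) < #|L| cannot vanish on all of L. *)
Lemma trq_neq0 : exists w, tr N2 w != 0.
Proof.
have [w /= tr_w|tr0] := pickP (fun w : finvect_type L => tr N2 w != 0); first by exists w.
have := N2_gt0; have := mul_e_N2; case: N2 tr0 => [|M] // tr0 eM _; exfalso.
pose p : {poly L} := \sum_(i < M.+1) 'X^(2 ^ (e * i)).
have size_p : size p = (2 ^ (e * M)).+1.
  rewrite /p big_ord_recr /= addrC size_polyDl size_polyXn //.
  apply: leq_ltn_trans (size_sum _ _ _) _; apply/bigmax_leqP => i _.
  by rewrite size_polyXn ltn_exp2l // ltn_pmul2l ?e_gt0.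
have p_nz : p != 0 by rewrite -size_poly_eq0 size_p.
have := max_poly_roots p_nz (rs := enum (finvect_type L)).
rewrite enum_uniq -cardE card_finvect size_p ltnS leqNgt ltn_exp2l // -eM ltn_pmul2l ?e_gt0 //.
rewrite ltnSn => roots_bound.
suff /roots_bound/(_ isT) : all (root p) (enum (finvect_type L)) by [].
apply/allP => w _; apply/eqP; rewrite horner_sum -[RHS](eqP (negbFE (tr0 w))).
by apply: eq_bigr => i _; rewrite hornerXn.
Qed.

Lemma trq_nondegenerate z : (forall y, tr N2 (y * z) = 0) -> z = 0.
Proof.
move=> tr_z0; have [w tr_w] := trq_neq0; apply: contraTeq tr_w => z_nz.
by rewrite negbK -(divfK z_nz w) tr_z0.
Qed.

Variable d : nat.
Hypothesis d_gt0 : (0 < d)%N.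
Hypothesis e_gcd : e = gcdn (2 * n) d.

Lemma e_dvd_d : (e %| d)%N.
Proof. by rewrite e_gcd dvdn_gcdr. Qed.

(* Otherwise 2e would divide both 2n and d, hence their gcd e. *)
Lemma odd_d_div_e : odd (d %/ e).
Proof.
apply: contraT => even_de.
have [h dh] : exists h, d = (h * (e * 2))%N.
  exists (d %/ e)./2; rewrite -{1}(divnK e_dvd_d) -{1}(odd_double_half (d %/ e)).
  by rewrite (negPf even_de) add0n -muln2; ring.
have : (e * 2 %| e)%N.
  rewrite {2}e_gcd dvdn_gcd; apply/andP; split; last by rewrite dh dvdn_mull.
  by rewrite -(divnK e_dvd_n) mulnCA mulnC dvdn_mull.
by move/dvdn_leq => /(_ e_gt0); rewrite -{2}[e]muln1 leq_mul2l orbF gtn_eqF ?e_gt0.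
Qed.

Lemma frob_d_fixed_mem1 x : frob d x = x -> x \in 1%VS.
Proof.
move=> fix_x; apply: frob_fixed_mem1.
have [u v uv _] := egcdnP (2 * n) d_gt0.
have fix_ud : frob (u * d) x = x by elim: u {uv} => [|u IH]; rewrite ?frob0 // mulSnr -frob_comp IH.
by rewrite -[RHS]fix_ud uv gcdnC -e_gcd frob_mod.
Qed.

Lemma frob_mul_dZ q (c : F) x : frob (q * d) (c *: x) = c *: frob (q * d) x.
Proof. by rewrite -(divnK e_dvd_d) mulnA mulnC frobZ. Qed.

Lemma frob_dZ (c : F) x : frob d (c *: x) = c *: frob d x.
Proof. by have := frob_mul_dZ 1 c x; rewrite mul1n. Qed.

Variables (k : nat) (a : nat -> L).
Hypothesis k_gt0 : (0 < k)%N.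
Hypothesis k_le_N : (k <= N)%N.
Hypothesis a0_fixed : a 0%N ^+ (2 ^ n) = a 0%N.

Definition Badj x := a 0%N * frob (N * d) x
  + \sum_(1 <= j < k) (a j * frob ((N - j) * d) x
                        + frob ((N + j) * d) (a j) * frob ((N + j) * d) x).

Lemma N_mul_d_mod : exists q, (N * d = q * (2 * n) + n)%N.
Proof.
exists (d %/ e)./2; rewrite -{1}(divnK e_dvd_d) -{1}(odd_double_half (d %/ e)).
by rewrite odd_d_div_e -[in RHS](divnK e_dvd_n) -muln2 add1n; ring.
Qed.

(* Frobenius powers are moved from y to x inside the trace: for the j-th term, the exponents
   (N - j) d and (N + j) d add up to a multiple of 2n, and for a_0 the exponents n and N d
   agree modulo 2n because d/e is odd. *)
Lemma Bform_trq x y : Bform n d e k a x y = tr N2 (y * Badj x).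
Proof.
rewrite /Bform -divn_mulAC // /Badj [in RHS]mulrDr [in RHS]raddfD; congr (_ + _).
  have [q Nd] := N_mul_d_mod.
  rewrite [RHS]trq_half; congr (tr N _).
  have frob_Nd z : frob (N * d) z = frob n z by rewrite Nd frob_mod.
  rewrite -/(frob _ x) -/(frob _ y) !frob_Nd !rmorphM /= frob_comp addnn -mul2n frob_period.
  by rewrite [frob n (a 0%N)]a0_fixed; ring.
rewrite mulr_sumr raddf_sum; apply: eq_big_nat => j /andP [j_gt0 j_lt_k].
rewrite !mulrDr !raddfD [LHS]addrC; congr (_ + _); first by rewrite /frob; congr (tr N2 _); ring.
have de := divnK e_dvd_d.
rewrite /= -(trq_frob_mul ((N + j) * (d %/ e))) (_ : e * _ = (N + j) * d)%N; last by rewrite -{2}de; ring.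
rewrite -/(frob _ y) !rmorphM /= frob_comp.
rewrite (_ : (N - j) * d + (N + j) * d = d %/ e * (2 * n) + 0)%N ?frob_mod ?frob0.
  by rewrite /frob; congr (tr N2 _); ring.
rewrite -mulnDl addnCA subnK; last by rewrite (leq_trans (ltnW j_lt_k)).
by rewrite -[in RHS](divnK e_dvd_n) -{1}de; ring.
Qed.

Local Notation K1 := (k - 1)%N.

(* Badj is a polynomial of degree 2(k-1) in the semilinear map frob d, starting at the power
   N - K1; its coefficients are a_(k-1), ..., a_1, a_0, then Frobenius conjugates of a_1, ..., a_(k-1). *)
Definition Badj_coef i :=
  if (i < K1)%N then a (K1 - i)
  else if i == K1 then a 0%N else frob ((N + (i - K1)) * d) (a (i - K1)).

Lemma Blin_twisted x :
  Badj x = \sum_(0 <= i < (K1 + K1).+1) Badj_coef i * iter (N - K1 + i) (frob d) x.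
Proof.
have K1_le_N : (K1 <= N)%N by rewrite (leq_trans (leq_subr _ _) k_le_N).
rewrite (big_cat_nat _ (n := K1)) //; last by rewrite leqW ?leq_addr.
rewrite (big_ltn (m := K1)); last by rewrite ltnS leq_addr.
rewrite /Badj big_split /= addrCA; congr (_ + (_ + _)).
- by rewrite /Badj_coef ltnn eqxx iter_frob subnK.
- rewrite big_add1 -subn1 big_nat_rev /= add0n.
  apply: eq_big_nat => i /andP [_ i_lt]; rewrite /Badj_coef iter_frob i_lt.
  rewrite (_ : (K1 - i.+1).+1 = K1 - i)%N; last by lia.
  by rewrite (_ : N - (K1 - i) = N - K1 + i)%N //; lia.
- rewrite -[K1.+1]add1n big_addn (_ : (K1 + K1).+1 - K1 = k)%N; last by lia.
  apply: eq_big_nat => i /andP [i_gt0 i_lt]; rewrite /Badj_coef iter_frob.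
  rewrite ltnNge leq_addl (_ : (i + K1 == K1) = false) ?addnK; last by lia.
  by rewrite /= addnCA subnK // addnC.
Qed.

Lemma Blin_linear : linear Badj.
Proof.
move=> c x y; rewrite !Blin_twisted scaler_sumr -big_split; apply: eq_bigr => i _ /=.
by rewrite !iter_frob rmorphD /= frob_mul_dZ mulrDr scalerAr.
Qed.

Lemma dim_RadB : (exists2 j, (j < k)%N & a j != 0) -> (\dim (RadB n d e k a) <= K1 + K1)%N.
Proof.
move=> [j j_lt_k aj_nz].
have Badj_coef_nz : exists2 i, (i <= K1 + K1)%N & Badj_coef i != 0.
  case: j j_lt_k aj_nz => [|j] j_lt_k aj_nz.
    by exists K1; rewrite ?leq_addr // /Badj_coef ltnn eqxx.
  exists (K1 - j.+1)%N; first by lia.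
  rewrite /Badj_coef (_ : K1 - j.+1 < K1)%N; last by lia.
  by rewrite (_ : K1 - (K1 - j.+1) = j.+1)%N //; lia.
have RadB_ker : (RadB n d e k a <= lker (linfun Badj))%VS.
  apply/span_subvP => w /mapP [z]; rewrite mem_enum => /forallP Bz0 ->.
  rewrite memv_ker (linfunE Blin_linear); apply/eqP/trq_nondegenerate => y.
  by rewrite -Bform_trq; apply/eqP.
apply: (@dim_semilinear_roots _ _ _ frob_dZ frob_d_fixed_mem1 (N - K1) _ _ _ Badj_coef_nz).
by move=> x /(subvP RadB_ker); rewrite memv_ker (linfunE Blin_linear) Blin_twisted => /eqP.
Qed.

End Frobenius.

Theorem theorem2p1 (n d e k : nat) (F : finFieldType) (L : fieldExtType F)
  (a : nat -> L) :
  (0 < n)%N -> (0 < d)%N -> (0 < e)%N ->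
  e = gcdn n d -> e = gcdn (2 * n) d ->
  (1 <= k)%N -> (k <= n %/ e)%N ->
  #|F| = (2 ^ e)%N ->
  \dim {:L} = ((2 * n) %/ e)%N ->
  a 0%N ^+ (2 ^ n) = a 0%N ->
  (exists2 j : nat, (j < k)%N & a j != 0) ->
  ((2 * n) %/ e - 2 * (k - 1) <= rkB n d e k a)%N.
Proof.
move=> n_gt0 d_gt0 _ e_gcd_n e_gcd_2n k_gt0 k_le_N Fcard Ldim a0_fixed a_nz.
have e_dvd_n : (e %| n)%N by rewrite e_gcd_n dvdn_gcdl.
rewrite /rkB; apply: leq_sub2l; rewrite mul2n -addnn.
exact: (@dim_RadB F L e Fcard n n_gt0 e_dvd_n Ldim d d_gt0 e_gcd_2n k a k_gt0 k_le_N a0_fixed a_nz).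
Qed.
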